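(* Fix $d>0$ and $J_d\ge1$, and assume (1) $t_i^{\max}(d)>0$ for all $i$ and (2) $\sum_{i=1}^Ub_i^{\min}(t_i^{\max}(d))\le B$ (with each $b_i^{\min}(t_i^{\max}(d))$ finite). Let $c_i=p_i^{\max}g_i/N_0$ and let $\boldsymbol b^{(0)}$ be the optimal solution of $$\min_{\boldsymbol b}\ \sum_{i=1}^U\frac{N_id}{b_i\log_2(1+c_i/b_i)}\quad\text{s.t.}\quad\sum_{i=1}^Ub_i\le B,\quad b_i\ge b_i^{\min}\big(t_i^{\max}(d)\big)\ \forall i.$$ Set $p_i^{(0)}=p_i^{\max}$, $t_i^{(0)}=\dfrac{N_id}{b_i^{(0)}\log_2(1+c_i/b_i^{(0)})}$ and $f_i^{(0)}=\dfrac{Z_id+(J_d-1)G_id}{T-J_dt_i^{(0)}}$. Then $J_dt_i^{(0)}<T$ and $(\boldsymbol t^{(0)},\boldsymbol b^{(0)},\boldsymbol p^{(0)},\boldsymbol f^{(0)})$ satisfies, for all $i$, $$\frac{Z_id+(J_d-1)G_id}{f_i}+J_dt_i\le T,\quad t_ib_i\log_2\!\Big(1+\frac{p_ig_i}{N_0b_i}\Big)\ge N_id,\quad\sum_{j}b_j\le B,\quad 0\le p_i\le p_i^{\max},\quad 0<f_i\le f_i^{\max},\quad b_i>0,\quad t_i\ge0.$$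
   Context: $U$ users; $t_i,b_i,p_i,f_i$ are user $i$'s per-round transmission time, bandwidth, transmit power and CPU frequency, with limits $p_i^{\max}>0$, $f_i^{\max}>0$; $g_i>0$ the channel power gain, $N_0>0$ the noise power spectral density, $N_i>0$ the number of classes (payload $N_id$ bits), $B>0$ the total bandwidth, $T>0$ the total time budget; $Z_i=D_iC_i^{(\mathrm{init})}>0$ and $G_i=D_iC_i^{(\mathrm{ret})}\ge0$ the per-dimension CPU cycles of the first round and each retraining round. Define $t_i^{\max}(d)=\big(T-\frac{Z_id+(J_d-1)G_id}{f_i^{\max}}\big)/J_d$ and, for $t>0$, $b_i^{\min}(t)=\inf\{b>0:\ t\,b\log_2(1+\frac{p_i^{\max}g_i}{N_0b})\ge N_id\}$. *)

From HB Require Import structures.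
From mathcomp Require Import all_boot all_order all_algebra.
From mathcomp Require Import all_classical all_reals all_analysis.
Set Implicit Arguments. Unset Strict Implicit. Unset Printing Implicit Defensive.
Import Order.TTheory GRing.Theory Num.Theory.
Local Open Scope classical_set_scope.
Local Open Scope ring_scope.

Definition log2 {R : realType} (x : R) : R := ln x / ln 2.

Definition rate {R : realType} (b p g N0 : R) : R := b * log2 (1 + p * g / (N0 * b)).

Definition cycles {R : realType} (Z G d : R) (J : nat) : R :=
  Z * d + (J%:R - 1) * G * d.

Definition tmax {R : realType} (T Z G fmax d : R) (J : nat) : R :=
  (T - cycles Z G d J / fmax) / J%:R.

Definition bfeas {R : realType} (t pmax g N0 Nd : R) : set R :=
  [set b | 0 < b /\ Nd <= t * rate b pmax g N0].

Definition bmin {R : realType} (t pmax g N0 Nd : R) : R :=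
  inf (bfeas t pmax g N0 Nd).

From HB Require Import structures.
From mathcomp Require Import all_boot all_order all_algebra.
From mathcomp Require Import all_classical all_reals all_analysis.
From mathcomp Require Import ring lra.
Set Implicit Arguments. Unset Strict Implicit. Unset Printing Implicit Defensive.
Import Order.TTheory GRing.Theory Num.Theory.
Local Open Scope classical_set_scope.
Local Open Scope ring_scope.

(* The rate b log(1 + c/b) is nondecreasing in b, tends to 0 as b -> 0 and is
   continuous, so the set defining b_i^min(t) is a closed up-ray; hence b_i^(0) itself
   delivers the payload within t_i^max, i.e. t_i^(0) <= t_i^max, and the CPU frequency
   absorbing the remaining time budget stays below f_i^max. *)

Section RateLn.
Variable R : realType.

Definition rate_ln (c b : R) : R := b * ln (1 + c / b).

Lemma rateE (b p g N0 : R) : rate b p g N0 = rate_ln (p * g / N0) b / ln 2.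
Proof. by rewrite /rate /log2 /rate_ln invfM !mulrA. Qed.

(* Concavity of ln between 1 + c/b1 and 1, with weight b1/b2. *)
Lemma rate_ln_le (c b1 b2 : R) :
  0 < c -> 0 < b1 -> b1 <= b2 -> rate_ln c b1 <= rate_ln c b2.
Proof.
move=> c0 b10 b12; have b20 : 0 < b2 by lra.
have s0 : 0 <= b1 / b2 by rewrite divr_ge0 // ltW.
have s1 : b1 / b2 <= 1 by rewrite ler_pdivrMr // mul1r.
have a0 : 0 < 1 + c / b1 by rewrite addr_gt0 // divr_gt0.
have := @concave_ln R (Itv01 s0 s1) _ _ a0 ltr01.
rewrite !convRE /= ln1 mulr0 addr0.
have -> : b1 / b2 * (1 + c / b1) + (1 - b1 / b2) * 1 = 1 + c / b2.
  by field; rewrite ?gt_eqF.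
have -> : rate_ln c b1 = b2 * (b1 / b2 * ln (1 + c / b1)).
  by rewrite /rate_ln; field; rewrite gt_eqF.
by rewrite ler_pM2l.
Qed.

Lemma rate_ln_le_linear (c x b : R) :
  0 < c -> 0 < x -> x <= b -> rate_ln c b <= rate_ln c x + (b - x) * (c / x).
Proof.
move=> c0 x0 xb; have b0 : 0 < b by lra.
have cbx : c / b <= c / x by rewrite ler_pM2l // lef_pV2 ?posrE.
have lnb_lnx : ln (1 + c / b) <= ln (1 + c / x).
  by rewrite ler_ln ?posrE ?addr_gt0 ?divr_gt0 // lerD2l.
have lnb_cx : ln (1 + c / b) <= c / x.
  by apply: le_trans cbx; apply: le_ln1Dx; apply: lt_trans (divr_gt0 c0 b0); rewrite ltrN10.
have P1 : 0 <= x * (ln (1 + c / x) - ln (1 + c / b)).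
  by rewrite mulr_ge0 ?subr_ge0 // ltW.
have P2 : 0 <= (b - x) * (c / x - ln (1 + c / b)).
  by rewrite mulr_ge0 ?subr_ge0.
rewrite /rate_ln; lra.
Qed.

(* With 1 + c/m = e^y one gets rate_ln c m = m y <= 2c/y, since e^y - 1 >= y^2/2. *)
Lemma rate_ln_small (c e : R) : 0 < c -> 0 < e -> exists2 m, 0 < m & rate_ln c m < e.
Proof.
move=> c0 e0; pose y := 2 * c / e + 1.
have y0 : 0 < y by rewrite addr_gt0 // divr_gt0 // mulr_gt0.
have expRy : 1 + y ^+ 2 / 2 <= expR y by exact: (@expR_ge1Dxn R y 1 (ltW y0)).
have y2 : 0 < y ^+ 2 / 2 by rewrite divr_gt0 // exprn_gt0.
have E1 : 0 < expR y - 1 by lra.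
pose m := c / (expR y - 1).
have m0 : 0 < m by rewrite divr_gt0.
exists m => //.
have -> : rate_ln c m = m * y.
  rewrite /rate_ln /m invf_div mulrCA mulfV ?gt_eqF // mulr1.
  by rewrite addrCA subrr addr0 expRK.
have my2 : m * (y ^+ 2 / 2) <= c.
  by rewrite -[leRHS](mulfVK (lt0r_neq0 E1)) ler_pM2l //; lra.
have cy : 2 * c < e * y by rewrite /y mulrDr mulr1 mulrCA mulfV ?gt_eqF // mulr1; lra.
rewrite -(ltr_pM2r y0); rewrite expr2 in my2; nra.
Qed.

Definition rate_feas (t c K : R) : set R := [set b | 0 < b /\ K <= t * rate_ln c b].

Lemma rate_feas_ge_inf (t c K x : R) : 0 < t -> 0 < c -> 0 < K ->
  rate_feas t c K !=set0 -> inf (rate_feas t c K) <= x -> rate_feas t c K x.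
Proof.
move=> t0 c0 K0 ne infx.
have up b y : rate_feas t c K b -> b <= y -> rate_feas t c K y.
  move=> [b0 Kb] le_by; have y0 : 0 < y by lra.
  by split=> //; apply: le_trans Kb _; rewrite ler_pM2l // rate_ln_le.
have [m m0 small] := rate_ln_small c0 (divr_gt0 K0 t0).
have lbm : lbound (rate_feas t c K) m.
  move=> b [b0 Kb]; rewrite leNgt; apply/negP => bm.
  rewrite ltr_pdivlMr // mulrC in small.
  by have := rate_ln_le c0 b0 (ltW bm); rewrite -(ler_pM2l t0); lra.
have x0 : 0 < x by apply: lt_le_trans m0 _; apply: le_trans infx; exact: lb_le_inf.
have above y : x < y -> rate_feas t c K y.
  move=> xy; have [s Ss sy] := inf_lt ne (le_lt_trans infx xy).
  exact: up Ss (ltW sy).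
split=> //; apply/ler_addgt0Pr => e e0.
pose del := e * x / (t * c).
have del0 : 0 < del by rewrite divr_gt0 ?mulr_gt0.
have [_ Kdel] := above (x + del) (ltr_pwDr del0 (lexx x)).
have := rate_ln_le_linear c0 x0 (ler_wpDr (ltW del0) (lexx x)).
rewrite addrAC subrr add0r -(ler_pM2l t0) mulrDr.
have -> : t * (del * (c / x)) = e by rewrite /del; field; rewrite ?gt_eqF.
lra.
Qed.

Lemma bfeasE (t p g N0 Nd : R) :
  0 < N0 -> bfeas t p g N0 Nd = rate_feas t (p * g / N0) (Nd * ln 2).
Proof.
move=> N00; have ln2 : 0 < ln (2 : R) by rewrite ln_gt0 // ltr1n.
apply/seteqP; split=> b /= [b0 H]; split=> //; move: H;
  by rewrite rateE mulrA ler_pdivlMr.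
Qed.

Lemma bfeas_ge_bmin (t p g N0 Nd b : R) :
  0 < t -> 0 < p -> 0 < g -> 0 < N0 -> 0 < Nd ->
  bfeas t p g N0 Nd !=set0 -> bmin t p g N0 Nd <= b -> bfeas t p g N0 Nd b.
Proof.
move=> t0 p0 g0 N00 Nd0; rewrite /bmin bfeasE //.
apply: rate_feas_ge_inf => //; first by rewrite !divr_gt0 ?mulr_gt0.
by rewrite mulr_gt0 // ln_gt0 // ltr1n.
Qed.

End RateLn.

Section Timing.
Variable R : realType.

Lemma cycles_gt0 (Z G d : R) (J : nat) :
  0 < Z -> 0 <= G -> 0 < d -> (1 <= J)%N -> 0 < cycles Z G d J.
Proof.
move=> Z0 G0 d0 J1; rewrite /cycles ltr_wpDr ?mulr_gt0 //.
by rewrite (mulr_ge0 _ (ltW d0)) // mulr_ge0 // subr_ge0 ler1n.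
Qed.

Lemma mul_tmax (T Z G fm d : R) (J : nat) :
  (0 < J)%N -> J%:R * tmax T Z G fm d J = T - cycles Z G d J / fm.
Proof. by move=> J0; rewrite /tmax mulrC divfK // pnatr_eq0 -lt0n. Qed.

Lemma freq_within (c fm s : R) :
  0 < c -> 0 < fm -> c / fm <= s -> 0 < c / s <= fm /\ c / (c / s) = s.
Proof.
move=> c0 fm0 cs; have s0 : 0 < s by apply: lt_le_trans cs; rewrite divr_gt0.
split; last by rewrite divKf // gt_eqF.
by rewrite divr_gt0 //= ler_pdivrMr // mulrC -ler_pdivrMr.
Qed.

End Timing.

Theorem proposition3 (R : realType) (U : nat)
  (pmax fmax g Z G : 'I_U -> R) (N : 'I_U -> nat) (N0 B T : R)
  (d J : nat) (b0 : 'I_U -> R)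
  (hpmax : forall i, 0 < pmax i) (hfmax : forall i, 0 < fmax i)
  (hg : forall i, 0 < g i) (hN0 : 0 < N0) (hN : forall i, (0 < N i)%N)
  (hB : 0 < B) (hT : 0 < T) (hZ : forall i, 0 < Z i) (hG : forall i, 0 <= G i)
  (hd : (0 < d)%N) (hJ : (1 <= J)%N)
  (* (1) *)
  (h1 : forall i, 0 < tmax T (Z i) (G i) (fmax i) d%:R J)
  (* (2): each b_i^min(t_i^max(d)) finite (the defining set is nonempty) and their sum is <= B *)
  (h2fin : forall i, bfeas (tmax T (Z i) (G i) (fmax i) d%:R J) (pmax i) (g i) N0
                      ((N i)%:R * d%:R) !=set0)
  (h2 : \sum_(i < U) bmin (tmax T (Z i) (G i) (fmax i) d%:R J) (pmax i) (g i) N0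
                      ((N i)%:R * d%:R) <= B)
  (* b0 is an optimal solution of the bandwidth problem, with c_i = pmax_i g_i / N0 *)
  (hb0feas : \sum_(i < U) b0 i <= B /\
     forall i, bmin (tmax T (Z i) (G i) (fmax i) d%:R J) (pmax i) (g i) N0
                      ((N i)%:R * d%:R) <= b0 i)
  (hb0opt : forall b : 'I_U -> R,
     \sum_(i < U) b i <= B ->
     (forall i, bmin (tmax T (Z i) (G i) (fmax i) d%:R J) (pmax i) (g i) N0
                      ((N i)%:R * d%:R) <= b i) ->
     \sum_(i < U) ((N i)%:R * d%:R / (b0 i * log2 (1 + (pmax i * g i / N0) / b0 i)))
     <= \sum_(i < U) ((N i)%:R * d%:R / (b i * log2 (1 + (pmax i * g i / N0) / b i)))) :
  let t0 := fun i => (N i)%:R * d%:R / (b0 i * log2 (1 + (pmax i * g i / N0) / b0 i)) in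
  let p0 := pmax in
  let f0 := fun i => cycles (Z i) (G i) d%:R J / (T - J%:R * t0 i) in
  (forall i, J%:R * t0 i < T) /\
  (forall i,
     cycles (Z i) (G i) d%:R J / f0 i + J%:R * t0 i <= T /\
     (N i)%:R * d%:R <= t0 i * rate (b0 i) (p0 i) (g i) N0 /\
     \sum_(j < U) b0 j <= B /\
     0 <= p0 i <= pmax i /\
     0 < f0 i <= fmax i /\
     0 < b0 i /\
     0 <= t0 i).
Proof.
move=> t0 p0 f0; have [hsum hb0min] := hb0feas.
have user i : [/\ 0 < b0 i, 0 <= t0 i,
    (N i)%:R * d%:R <= t0 i * rate (b0 i) (p0 i) (g i) N0 &
    J%:R * t0 i <= T - cycles (Z i) (G i) d%:R J / fmax i].
  have Nd0 : 0 < (N i)%:R * d%:R :> R by rewrite mulr_gt0 // ltr0n.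
  have [b0i Ndr] := bfeas_ge_bmin (h1 i) (hpmax i) (hg i) hN0 Nd0 (h2fin i) (hb0min i).
  have r0 : 0 < rate (b0 i) (pmax i) (g i) N0.
    by rewrite -(pmulr_rgt0 _ (h1 i)); apply: lt_le_trans Ndr.
  have t0E : t0 i = (N i)%:R * d%:R / rate (b0 i) (pmax i) (g i) N0.
    by rewrite /t0 /rate; congr (_ / (_ * log2 (1 + _))); rewrite invfM mulrA.
  split=> //; rewrite t0E.
  - exact: ltW (divr_gt0 Nd0 r0).
  - by rewrite /p0 divfK ?gt_eqF.
  - by rewrite -mul_tmax // ler_pM2l ?ltr0n // ler_pdivrMr.
have cyc_gt0 i : 0 < cycles (Z i) (G i) d%:R J by rewrite cycles_gt0 ?ltr0n.
have Jt0 i : J%:R * t0 i < T.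
  have [_ _ _ Jt] := user i; apply: le_lt_trans Jt _.
  by rewrite ltrBlDr ltrDl divr_gt0.
split=> // i; have [b0i t0i Ndr Jt] := user i.
have [f0i f0E] : 0 < f0 i <= fmax i /\ cycles (Z i) (G i) d%:R J / f0 i = T - J%:R * t0 i.
  by apply: freq_within => //; lra.
by rewrite f0E subrK /p0 !lexx (ltW (hpmax i)); do ?split.
Qed.
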